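(* For every integer $k\ge 1$ there is a polynomial $D_k$ of degree exactly $2k-2$ such that $d_k(n)=D_k(n)$ for all integers $n\ge 1$; and for every integer $k\ge 2$ there is a polynomial $S_k$ of degree exactly $2k-3$ such that $s_k(n)=S_k(n)$ for all integers $n\ge 1$.
   Context: For $n\ge 1$, the $2\times n$ board consists of $2n$ unit squares arranged in 2 rows and $n$ columns; two squares are adjacent iff they share an edge. A piece is a nonempty set of squares that is connected under adjacency. A division of the board into $k$ pieces is a partition of the set of all $2n$ squares into exactly $k$ pieces. $d_k(n)$ denotes the number of divisions of the $2\times n$ board into $k$ pieces. $s_k(n)$ denotes the number of such divisions in which the two squares of the rightmost column lie in different pieces. *)

From mathcomp Require Import all_boot all_order all_algebra.
Set Implicit Arguments. Unset Strict Implicit. Unset Printing Implicit Defensive.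

(* A square of the 2 x n board: (row, column), row in {0,1}, column in {0..n-1}. *)
Definition square (n : nat) : finType := ('I_2 * 'I_n)%type.

Definition adjacent (n : nat) : rel (square n) :=
  fun x y =>
    ((x.1 == y.1) && ((x.2.+1 == y.2 :> nat) || (y.2.+1 == x.2 :> nat)))
    || ((x.2 == y.2) && (x.1 != y.1)).

Definition connected_set (n : nat) (A : {set square n}) : bool :=
  [forall x in A, forall y in A,
     connect [rel u v | adjacent u v && (u \in A) && (v \in A)] x y].

Definition piece (n : nat) (A : {set square n}) : bool :=
  (A != set0) && connected_set A.

Definition division (n k : nat) (P : {set {set square n}}) : bool :=
  [&& partition P [set: square n], #|P| == k & [forall A in P, piece A]].

Arguments division : clear implicits.
Definition d (k n : nat) : nat := #|[set P | division n k P]|.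

(* The two squares of the rightmost column lie in different pieces
   (only meaningful for n >= 1). *)
Definition rightmost_split (n : nat) (P : {set {set square n}}) : bool :=
  [exists j : 'I_n, (j.+1 == n) &&
     (pblock P (@ord0 1, j) != pblock P (@ord_max 1, j))].

Definition s (k n : nat) : nat := #|[set P | division n k P && rightmost_split P]|.

From mathcomp Require Import all_boot all_order all_algebra zify ring.
Set Implicit Arguments. Unset Strict Implicit. Unset Printing Implicit Defensive.

(* Transfer method.  A division P of the 2 x (n+2) board is determined by
   (i)  its restriction to the first n+1 columns, which is again a division
        (every piece meeting the old board stays connected there, because a
        path leaving through the new column can be short-cut through the old
        last column), and
   (ii) the "column state" of P: three bits telling whether each new square
        is in the piece of its left neighbour and whether the two new squares
        are in the same piece.
   Conversely each division of the smaller board extends along any column state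
   compatible with its own last column, adding 0, 1 or 2 pieces.  Counting
   divisions by k and by whether the last column is joined (b = true) or split
   (b = false) therefore gives a linear recurrence in n (lemmas [count_joinedS]
   and [count_splitS]).  Writing every count in the binomial basis C(n, j)
   with natural coefficients, the recurrence is a discrete integration that
   raises the degree by exactly one at each new piece: joined counts with k+1
   pieces have degree exactly 2k, split counts with k+2 pieces degree exactly
   2k+1.  Finally a combination of binomials C(n-1, j) is a rational polynomial
   in n of the same degree, which gives [theorem3]. *)

Section SameBlock.
Variable T : finType.
Implicit Types P : {set {set T}}.

Definition same_block P x y := pblock P x == pblock P y.

Lemma mem_pblock_same P x y : partition P [set: T] ->
  (y \in pblock P x) = same_block P x y.
Proof. by case/and3P=> /eqP cov tI _; rewrite /same_block eq_pblock // cov inE. Qed.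

Lemma same_block_refl P x : same_block P x x.
Proof. exact: eqxx. Qed.

Lemma same_block_sym P x y : same_block P x y = same_block P y x.
Proof. by rewrite /same_block eq_sym. Qed.

Lemma same_block_trans P x y z :
  same_block P x y -> same_block P y z -> same_block P x z.
Proof. by rewrite /same_block => /eqP ->. Qed.

Lemma partition_eq P1 P2 : partition P1 [set: T] -> partition P2 [set: T] ->
  (forall x y, same_block P1 x y = same_block P2 x y) -> P1 = P2.
Proof.
move=> h1 h2 e.
rewrite -(preim_partition_pblock h1) -(preim_partition_pblock h2).
rewrite /preim_partition /equivalence_partition; apply: eq_imset => x.
by apply/setP=> y; rewrite !inE; have := e x y; rewrite /same_block => ->.
Qed.

Lemma same_block_preim (L : eqType) (g : T -> L) x y :
  same_block (preim_partition g [set: T]) x y = (g x == g y).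
Proof.
have eqi : {in [set: T] & &, equivalence_rel (fun x y => g x == g y)}.
  by move=> ? ? ? _ _ _; split=> // /eqP->.
rewrite -mem_pblock_same ?preim_partitionP //.
by rewrite (pblock_equivalence_partition eqi) ?inE.
Qed.

Lemma partition_pblock_imset P : partition P [set: T] -> P = pblock P @: [set: T].
Proof.
case/and3P=> /eqP cov tI n0; apply/setP=> B; apply/idP/imsetP.
  move=> PB; have /set0Pn[x Bx] : B != set0 by apply: contraNneq n0 => <-.
  by exists x; rewrite ?inE // (def_pblock tI PB Bx).
by case=> x _ ->; apply: pblock_mem; rewrite cov inE.
Qed.

Lemma card_imset_kernel (L1 L2 : finType) (f : T -> L1) (g : T -> L2) (x0 : T) :
  (forall x y, (f x == f y) = (g x == g y)) ->
  #|f @: [set: T]| = #|g @: [set: T]|.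
Proof.
move=> H.
have fg x y : f x = f y -> g x = g y by move/eqP; rewrite H => /eqP.
pose h l := g (odflt x0 [pick x | f x == l]).
have hf x : h (f x) = g x.
  by rewrite /h; case: pickP => [y /eqP fy /= | /(_ x)]; [apply: fg | rewrite eqxx].
have -> : g @: [set: T] = h @: (f @: [set: T]).
  by rewrite -imset_comp; apply: eq_imset => x; rewrite /= hf.
rewrite [RHS]card_in_imset // => _ _ /imsetP[x _ ->] /imsetP[y _ ->].
by rewrite !hf => /eqP; rewrite -H => /eqP.
Qed.

Lemma card_partition_labels P (L : finType) (g : T -> L) (x0 : T) :
  partition P [set: T] -> (forall x y, same_block P x y = (g x == g y)) ->
  #|P| = #|g @: [set: T]|.
Proof.
move=> hP H; rewrite {1}(partition_pblock_imset hP).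
by apply: card_imset_kernel x0 _ => x y; rewrite -H.
Qed.

End SameBlock.

Lemma connect_map (T1 T2 : finType) (e1 : rel T1) (e2 : rel T2) (f : T1 -> T2) :
  (forall x y, e1 x y -> connect e2 (f x) (f y)) ->
  forall x y, connect e1 x y -> connect e2 (f x) (f y).
Proof.
move=> H x _ /connectP[p pp ->]; elim: p x pp => [|z p IH] x /=; first by [].
by case/andP=> ez pz; apply: connect_trans (H _ _ ez) (IH _ pz).
Qed.

Lemma connect_cross (T : finType) (e : rel T) (S : pred T) x y :
  connect e x y -> S x -> ~~ S y -> exists z1 z2, [/\ e z1 z2, S z1 & ~~ S z2].
Proof.
move=> /connectP[p pp ->]; elim: p x pp => [|z p IH] x /=; first by move=> _ ->.
case/andP=> ez pz Sx; case Sz: (S z); first exact: IH.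
by move=> _; exists x, z; rewrite Sz.
Qed.

Lemma adjacent_sym m (x y : square m) : adjacent x y = adjacent y x.
Proof.
rewrite /adjacent; congr orb; first by rewrite eq_sym orbC.
by rewrite eq_sym [x.1 == _]eq_sym.
Qed.

Lemma adjacent_irr m (x : square m) : adjacent x x = false.
Proof. by rewrite /adjacent !eqxx /= orbF orbb gtn_eqF. Qed.

Lemma row_cases (r : 'I_2) : r = ord0 \/ r = ord_max.
Proof. by case: r => [[|[|r]] lr]; [left|right|]; rewrite //; apply: val_inj. Qed.

(* The board 2 x (n+2) is the board 2 x (n+1) ("old" squares, embedded as the
   first n+1 columns) plus a new column made of [ntop] and [nbot]; [otop] and
   [obot] form the last column of the old board. *)
Section Column.
Variable n : nat.

Definition emb (x : square n.+1) : square n.+2 :=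
  (x.1, widen_ord (leqnSn n.+1) x.2).
Definition unemb (z : square n.+2) : square n.+1 := (z.1, inord z.2).
Definition ntop : square n.+2 := (ord0, ord_max).
Definition nbot : square n.+2 := (ord_max, ord_max).
Definition otop : square n.+1 := (ord0, ord_max).
Definition obot : square n.+1 := (ord_max, ord_max).

Lemma embK : cancel emb unemb.
Proof.
by case=> r c; rewrite /unemb /=; congr pair; apply: val_inj; rewrite /= inordK.
Qed.

Lemma square_cases (y : square n.+2) :
  [\/ y = ntop, y = nbot | exists x, y = emb x].
Proof.
case: y => r c; have [e | ne] := eqVneq (val c) n.+1.
  have -> : c = ord_max by apply: val_inj.
  by case: (row_cases r) => ->; [apply: Or31 | apply: Or32].
have lc : c < n.+1 by have := ltn_ord c; rewrite ltnS leq_eqVlt (negbTE ne).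
by apply: Or33; exists (r, Ordinal lc); congr pair; apply: val_inj.
Qed.

Lemma emb_col x : val (emb x).2 < n.+1.
Proof. exact: ltn_ord x.2. Qed.

Lemma emb_ntop x : (emb x == ntop) = false.
Proof.
by apply/negbTE/eqP => /(congr1 (fun z => val z.2)) e; move: (emb_col x); rewrite e ltnn.
Qed.

Lemma emb_nbot x : (emb x == nbot) = false.
Proof.
by apply/negbTE/eqP => /(congr1 (fun z => val z.2)) e; move: (emb_col x); rewrite e ltnn.
Qed.

Lemma nbot_ntop : (nbot == ntop) = false. Proof. by []. Qed.

Lemma adjacent_emb x y : adjacent (emb x) (emb y) = adjacent x y.
Proof. by rewrite /adjacent /= -!val_eqE /= !val_eqE. Qed.

Lemma adjacent_emb_ntop x : adjacent (emb x) ntop = (x == otop).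
Proof.
case: x => r c; rewrite /adjacent /otop /= -!val_eqE /=.
have := ltn_ord c; rewrite xpair_eqE -val_eqE /=.
by case: (row_cases r) => ->; rewrite /= ?andbT ?andbF ?orbF // -?val_eqE /=; lia.
Qed.

Lemma adjacent_emb_nbot x : adjacent (emb x) nbot = (x == obot).
Proof.
case: x => r c; rewrite /adjacent /obot /= -!val_eqE /=.
have := ltn_ord c; rewrite xpair_eqE -val_eqE /=.
by case: (row_cases r) => ->; rewrite /= ?andbT ?andbF ?orbF // -?val_eqE /=; lia.
Qed.

Lemma adjacent_ntop_emb x : adjacent ntop (emb x) = (x == otop).
Proof. by rewrite adjacent_sym adjacent_emb_ntop. Qed.

Lemma adjacent_nbot_emb x : adjacent nbot (emb x) = (x == obot).
Proof. by rewrite adjacent_sym adjacent_emb_nbot. Qed.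

Lemma adjacent_ntop_nbot : adjacent ntop nbot.
Proof. by rewrite /adjacent /= -!val_eqE /= ?eqxx. Qed.
Lemma adjacent_nbot_ntop : adjacent nbot ntop.
Proof. by rewrite /adjacent /= -!val_eqE /= ?eqxx. Qed.
Lemma adjacent_otop_obot : adjacent otop obot.
Proof. by rewrite /adjacent /= -!val_eqE /= ?eqxx. Qed.
Lemma adjacent_obot_otop : adjacent obot otop.
Proof. by rewrite /adjacent /= -!val_eqE /= ?eqxx. Qed.

End Column.

Definition piece_rel m (A : {set square m}) : rel (square m) :=
  [rel u v | adjacent u v && (u \in A) && (v \in A)].

Lemma piece_rel_sym m (A : {set square m}) : connect_sym (piece_rel A).
Proof.
apply: sym_connect_sym => u v; rewrite /piece_rel /= adjacent_sym.
by case: (u \in A); case: (v \in A); rewrite ?andbT ?andbF.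
Qed.

Lemma piece_rel_step m (A : {set square m}) a b :
  a \in A -> b \in A -> (a == b) || adjacent a b -> connect (piece_rel A) a b.
Proof.
move=> aA bA /orP[/eqP -> // | ab].
by apply: connect1; rewrite /piece_rel /= ab aA bA.
Qed.

Lemma connect_hub m (A : {set square m}) h :
  (forall v, v \in A -> connect (piece_rel A) v h) ->
  forall z w, z \in A -> w \in A -> connect (piece_rel A) z w.
Proof.
move=> H z w zA wA; apply: connect_trans (H z zA) _.
by rewrite piece_rel_sym; apply: H.
Qed.

Lemma divisionI m (P : {set {set square m}}) :
  partition P [set: square m] ->
  (forall x y, same_block P x y -> connect (piece_rel (pblock P x)) x y) ->
  division m #|P| P.
Proof.
move=> hP H; rewrite /division hP eqxx /=; apply/forall_inP => A PA.
have [/eqP cov tI n0] := and3P hP.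
rewrite /piece; have -> : A != set0 by apply: contraNneq n0 => <-.
apply/forall_inP => x xA; apply/forall_inP => y yA.
have eA : A = pblock P x by rewrite (def_pblock tI PA xA).
by move: yA; rewrite eA mem_pblock_same // => /H.
Qed.

Lemma division_partition m k (P : {set {set square m}}) :
  division m k P -> partition P [set: square m].
Proof. by case/and3P. Qed.

Lemma division_card m k (P : {set {set square m}}) : division m k P -> #|P| = k.
Proof. by case/and3P=> _ /eqP. Qed.

Lemma division_connect m k (P : {set {set square m}}) : division m k P ->
  forall x y, same_block P x y -> connect (piece_rel (pblock P x)) x y.
Proof.
case/and3P=> hP _ /forall_inP H x y sxy.
have [/eqP cov tI n0] := and3P hP.
have xc : x \in cover P by rewrite cov inE.
have /andP[_ /forall_inP Hc] := H _ (pblock_mem xc).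
have := Hc x; rewrite mem_pblock xc => /(_ isT) /forall_inP /(_ y).
by rewrite mem_pblock_same // sxy => /(_ isT).
Qed.

Lemma division_shift m (Q : {set {set square m}}) d k :
  division m #|Q| Q && (#|Q| + d == k) = (d <= k) && division m (k - d) Q.
Proof.
rewrite /division eqxx /=.
by case: (partition _ _); case: [forall A in Q, piece A]; rewrite /= ?andbF //; lia.
Qed.

Lemma rightmost_splitE m (P : {set {set square m.+1}}) :
  rightmost_split P = ~~ same_block P (ord0, ord_max) (ord_max, ord_max).
Proof.
rewrite /rightmost_split /same_block.
apply/existsP/idP => [[j /andP[/eqP e ne]]|ne]; last by exists ord_max; rewrite eqxx.
by move: ne; have -> : j = ord_max by apply: val_inj; apply/eqP; rewrite /= -eqSS e.
Qed.

Section Restriction.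
Variable n : nat.
Local Notation T := (square n.+1).
Local Notation T' := (square n.+2).
Local Notation emb := (@emb n).
Local Notation ntop := (@ntop n).
Local Notation nbot := (@nbot n).
Local Notation otop := (@otop n).
Local Notation obot := (@obot n).

Definition restrict (P : {set {set T'}}) : {set {set T}} :=
  preim_partition (fun x => pblock P (emb x)) [set: T].

Lemma restrict_partition P : partition (restrict P) [set: T].
Proof. exact: preim_partitionP. Qed.

Lemma same_block_restrict P x y :
  same_block (restrict P) x y = same_block P (emb x) (emb y).
Proof. by rewrite same_block_preim. Qed.

Definition is_new (z : T') := (z == ntop) || (z == nbot).

Lemma is_new_emb x : is_new (emb x) = false.
Proof. by rewrite /is_new emb_ntop emb_nbot. Qed.

(* Folding the new column onto the old last column, choosing for a new square
   an old last-column square lying in the set B when possible. *)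
Definition retract (B : {set T'}) (z : T') : T :=
  if z == ntop then (if emb otop \in B then otop else obot)
  else if z == nbot then (if emb obot \in B then obot else otop)
  else unemb z.

Lemma retract_emb B u : retract B (emb u) = u.
Proof. by rewrite /retract emb_ntop emb_nbot embK. Qed.

Lemma retract_edge (B : {set T'}) (z1 z2 : T') : z1 \in B -> z2 \in B -> adjacent z1 z2 ->
  (retract B z1 == retract B z2) || adjacent (retract B z1) (retract B z2).
Proof.
move=> i1 i2 a12.
have new_pair : (retract B ntop == retract B nbot)
    || adjacent (retract B ntop) (retract B nbot).
  rewrite /retract !eqxx nbot_ntop /=.
  by case: ifP; case: ifP; rewrite ?eqxx ?adjacent_otop_obot ?adjacent_obot_otop ?orbT.
have [e1|e1|[w1 e1]] := square_cases z1; subst z1;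
  have [e2|e2|[w2 e2]] := square_cases z2; subst z2; move: a12 i1 i2.
- by rewrite adjacent_irr.
- by move=> _ _ _; exact: new_pair.
- by rewrite adjacent_ntop_emb => /eqP -> _ i2; rewrite retract_emb /retract eqxx i2 /= eqxx.
- by move=> _ _ _; rewrite eq_sym adjacent_sym.
- by rewrite adjacent_irr.
- rewrite adjacent_nbot_emb => /eqP -> _ i2.
  by rewrite retract_emb /retract eqxx nbot_ntop i2 /= eqxx.
- by rewrite adjacent_emb_ntop => /eqP -> i1 _; rewrite retract_emb /retract eqxx i1 /= eqxx.
- rewrite adjacent_emb_nbot => /eqP -> i1 _.
  by rewrite retract_emb /retract eqxx nbot_ntop i1 /= eqxx.
- by rewrite !retract_emb adjacent_emb => -> _ _; rewrite orbT.
Qed.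

Section FixedDivision.
Variables (k : nat) (P : {set {set T'}}).
Hypothesis divP : division n.+2 k P.

Lemma new_block_exit z x : is_new z -> same_block P z (emb x) ->
  exists2 w, is_new w && same_block P z w &
    ((w == ntop) && same_block P z (emb otop))
    || ((w == nbot) && same_block P z (emb obot)).
Proof.
move=> zn szx; have hP := division_partition divP.
have := connect_cross (division_connect divP szx) (S := is_new) zn.
rewrite is_new_emb => /(_ isT) [z1 [z2] [/= /andP[/andP[a12 i1] i2] n1 n2]].
move: i1 i2; rewrite !mem_pblock_same // => s1 s2.
have [e|e|[w e]] := square_cases z2; rewrite e /is_new ?eqxx ?orbT // in n2.
exists z1; first by rewrite n1 s1.
move: s2 n1 a12; rewrite e /is_new => s2 /orP[]/eqP ->.
  by rewrite adjacent_ntop_emb eqxx => /eqP <-; rewrite s2.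
by rewrite adjacent_nbot_emb eqxx /= => /eqP <-.
Qed.

Lemma ntop_block x : same_block P ntop (emb x) ->
  same_block P ntop (emb otop)
  || (same_block P ntop nbot && same_block P ntop (emb obot)).
Proof.
move=> h; have := new_block_exit _ h; rewrite /is_new eqxx => /(_ isT).
case=> w /andP[_ sw] /orP[/andP[_ ->] // | /andP[/eqP ew ->]].
by rewrite -ew sw orbT.
Qed.

Lemma nbot_block x : same_block P nbot (emb x) ->
  same_block P nbot (emb obot)
  || (same_block P nbot ntop && same_block P nbot (emb otop)).
Proof.
move=> h; have := new_block_exit _ h; rewrite /is_new eqxx orbT => /(_ isT).
case=> w /andP[_ sw] /orP[/andP[/eqP ew ->] | /andP[_ ->] //].
by rewrite -ew sw orbT.
Qed.

Lemma retract_mem x z : let B := pblock P (emb x) in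
  z \in B -> emb (retract B z) \in B.
Proof.
move=> B; have hP := division_partition divP.
have mB v : (v \in B) = same_block P (emb x) v by rewrite /B mem_pblock_same.
have [->|->|[w ->]] := square_cases z; last by rewrite retract_emb.
- rewrite /retract eqxx; case: ifP => // ho; rewrite !mB => h.
  move: (ntop_block (x := x)) ho; rewrite same_block_sym h mB => /(_ isT).
  case/orP=> [h1|/andP[_ h1]]; by rewrite (same_block_trans h h1).
- rewrite /retract eqxx nbot_ntop; case: ifP => // ho; rewrite !mB => h.
  move: (nbot_block (x := x)) ho; rewrite same_block_sym h mB => /(_ isT).
  case/orP=> [h1|/andP[_ h1]]; by rewrite (same_block_trans h h1).
Qed.

Lemma restrict_division : division n.+1 #|restrict P| (restrict P).
Proof.
have hP := division_partition divP.
apply: divisionI; first exact: restrict_partition.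
move=> x y sxy; set B := pblock P (emb x).
have mA u : (u \in pblock (restrict P) x) = (emb u \in B).
  by rewrite mem_pblock_same ?restrict_partition // same_block_restrict mem_pblock_same.
have edge z1 z2 : piece_rel B z1 z2 ->
    connect (piece_rel (pblock (restrict P) x)) (retract B z1) (retract B z2).
  rewrite /piece_rel /= => /andP[/andP[a12 i1] i2].
  by apply: piece_rel_step; rewrite ?mA ?retract_mem // retract_edge.
rewrite same_block_restrict in sxy.
by move: (division_connect divP sxy) => /(connect_map edge); rewrite !retract_emb.
Qed.

End FixedDivision.

(* The state of the new column: is ntop joined to its left neighbour, is nbot
   joined to its left neighbour, are ntop and nbot joined. *)
Definition state := (bool * bool * bool)%type.

Definition state_of (P : {set {set T'}}) : state :=
  (same_block P ntop (emb otop), same_block P nbot (emb obot), same_block P ntop nbot).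

(* A state is realisable over an old board whose last column is joined (u) or
   split (~~ u): joins are transitive. *)
Definition compatible (u : bool) (sg : state) :=
  let: (jt, jb, c) := sg in
  if u then ~~ ((jt && jb && ~~ c) || (c && (jt != jb))) else ~~ (jt && jb && c).

(* Number of pieces contained in the new column. *)
Definition new_pieces (sg : state) : nat :=
  let: (jt, jb, c) := sg in
  (~~ jt && ~~ (c && jb)) + (~~ jb && ~~ (c && jt) && ~~ c).

(* The piece of each square in the extension of Q along sg, labelled either
   by a block of Q or, for a piece inside the new column, by a boolean. *)
Definition ext_label (Q : {set {set T}}) (sg : state) (z : T') : ({set T} + bool)%type :=
  let: (jt, jb, c) := sg in
  if z == ntop then
    (if jt then inl (pblock Q otop) else if c && jb then inl (pblock Q obot) else inr false)
  else if z == nbot then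
    (if jb then inl (pblock Q obot) else if c && jt then inl (pblock Q otop) else inr (~~ c))
  else inl (pblock Q (unemb z)).

Definition extend Q sg := preim_partition (ext_label Q sg) [set: T'].

Lemma ext_label_emb Q sg x : ext_label Q sg (emb x) = inl (pblock Q x).
Proof. by case: sg => [[jt jb] c]; rewrite /ext_label emb_ntop emb_nbot embK. Qed.

Lemma ext_label_ntop Q sg : ext_label Q sg ntop = let: (jt, jb, c) := sg in
  (if jt then inl (pblock Q otop) else if c && jb then inl (pblock Q obot) else inr false).
Proof. by case: sg => [[jt jb] c]; rewrite /ext_label eqxx. Qed.

Lemma ext_label_nbot Q sg : ext_label Q sg nbot = let: (jt, jb, c) := sg in
  (if jb then inl (pblock Q obot) else if c && jt then inl (pblock Q otop) else inr (~~ c)).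
Proof. by case: sg => [[jt jb] c]; rewrite /ext_label eqxx nbot_ntop. Qed.

Lemma extend_partition Q sg : partition (extend Q sg) [set: T'].
Proof. exact: preim_partitionP. Qed.

Lemma same_block_extend Q sg z w :
  same_block (extend Q sg) z w = (ext_label Q sg z == ext_label Q sg w).
Proof. exact: same_block_preim. Qed.

Lemma restrict_extend Q sg : partition Q [set: T] -> restrict (extend Q sg) = Q.
Proof.
move=> hQ; apply: partition_eq; rewrite ?restrict_partition // => x y.
by rewrite same_block_restrict same_block_extend !ext_label_emb.
Qed.

Lemma state_extend Q sg : compatible (same_block Q otop obot) sg ->
  state_of (extend Q sg) = sg.
Proof.
have inlE (X Y : {set T}) : (inl X == inl Y :> ({set T} + bool)) = (X == Y) by [].
case: sg => [[jt jb] c].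
rewrite /state_of !same_block_extend !ext_label_emb /ext_label !eqxx nbot_ntop /=.
rewrite /same_block; case: (pblock Q otop =P pblock Q obot) => [->|/eqP ne];
  by case: jt; case: jb; case: c; rewrite //= ?inlE ?eqxx ?(negbTE ne) // eq_sym (negbTE ne).
Qed.

Lemma setT_column : [set: T'] = ntop |: (nbot |: (emb @: [set: T])).
Proof.
apply/setP => z; rewrite !inE; apply/esym.
have [->|->|[w ->]] := square_cases z; rewrite ?eqxx ?orbT //.
by rewrite imset_f ?inE ?orbT.
Qed.

Lemma card_extend Q sg : partition Q [set: T] -> #|extend Q sg| = #|Q| + new_pieces sg.
Proof.
move=> hQ; rewrite (card_partition_labels ntop (extend_partition Q sg) (same_block_extend Q sg)).
rewrite {2}(partition_pblock_imset hQ) setT_column !imsetU1.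
have -> : ext_label Q sg @: (emb @: [set: T]) = inl @: (pblock Q @: [set: T]).
  by rewrite -!imset_comp; apply: eq_imset => x; rewrite /= ext_label_emb.
set O := inl @: _.
have cO : #|O| = #|pblock Q @: [set: T]| by apply: card_imset => a b [].
have mO a : (inl (pblock Q a) \in O) = true by apply: imset_f; apply: imset_f; rewrite inE.
have mOr b : (inr b \in O) = false by apply/negbTE/imsetP => -[? _].
rewrite !cardsU1 cO !inE; case: sg => [[jt jb] c].
rewrite /ext_label !eqxx nbot_ntop /new_pieces.
by case: jt; case: jb; case: c; rewrite /= ?mO ?mOr ?orbT /= ?eqxx [RHS]addnC !addnA.
Qed.

Lemma ext_label_ntop_inl Q sg X : ext_label Q sg ntop = inl X ->
  ext_label Q sg (emb otop) = inl X
  \/ (ext_label Q sg nbot = inl X /\ ext_label Q sg (emb obot) = inl X).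
Proof.
rewrite !ext_label_emb ext_label_ntop ext_label_nbot; case: sg => [[jt jb] c].
case: jt => [[<-]|]; first by left.
by case: c; case: jb => //= -[<-]; right.
Qed.

Lemma ext_label_nbot_inl Q sg X : ext_label Q sg nbot = inl X ->
  ext_label Q sg (emb obot) = inl X
  \/ (ext_label Q sg ntop = inl X /\ ext_label Q sg (emb otop) = inl X).
Proof.
rewrite !ext_label_emb ext_label_ntop ext_label_nbot; case: sg => [[jt jb] c].
case: jb => [[<-]|]; first by left.
by case: c; case: jt => //= -[<-]; right.
Qed.

Lemma ext_label_inl Q sg z X : ext_label Q sg z = inl X -> exists a, X = pblock Q a.
Proof.
have [->|->|[a ->]] := square_cases z.
- by case/ext_label_ntop_inl => [|[_]]; rewrite ext_label_emb => -[<-]; eexists.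
- by case/ext_label_nbot_inl => [|[_]]; rewrite ext_label_emb => -[<-]; eexists.
- by rewrite ext_label_emb => -[<-]; exists a.
Qed.

Lemma ext_label_inr Q sg z b : ext_label Q sg z = inr b -> is_new z.
Proof.
have [->|->|[a ->]] := square_cases z; rewrite /is_new ?eqxx ?orbT //.
by rewrite ext_label_emb.
Qed.

Section ExtendDivision.
Variables (k : nat) (Q : {set {set T}}) (sg : state).
Hypothesis divQ : division n.+1 k Q.

Let B z := pblock (extend Q sg) z.

Lemma mem_extend_block z v : (v \in B z) = (ext_label Q sg z == ext_label Q sg v).
Proof. by rewrite /B mem_pblock_same ?extend_partition // same_block_extend. Qed.

Lemma extend_old_connect z y a : emb y \in B z -> emb a \in B z ->
  connect (piece_rel (B z)) (emb y) (emb a).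
Proof.
have hQ := division_partition divQ.
rewrite !mem_extend_block !ext_label_emb => /eqP ey /eqP ea.
have sya : same_block Q y a.
  have [eya] : inl (pblock Q y) = inl (pblock Q a) :> ({set T} + bool) by rewrite -ey.
  by rewrite /same_block eya.
apply: (connect_map _ (division_connect divQ sya)) => u1 u2.
rewrite /piece_rel /= => /andP[/andP[a12 i1] i2]; apply: connect1.
move: i1 i2; rewrite !mem_pblock_same // /same_block => /eqP e1 /eqP e2.
by rewrite /= adjacent_emb a12 !mem_extend_block !ext_label_emb ey -e1 -e2 !eqxx.
Qed.

Lemma extend_new_connect z a v : emb a \in B z -> v \in B z -> is_new v ->
  exists2 w, emb w \in B z & connect (piece_rel (B z)) v (emb w).
Proof.
rewrite !mem_extend_block ext_label_emb => /eqP e /eqP ev.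
rewrite e in ev; move/esym: ev => ev.
have mB u : ext_label Q sg u = inl (pblock Q a) -> u \in B z.
  by move=> eu; rewrite mem_extend_block e eu.
have edge u1 u2 : ext_label Q sg u1 = inl (pblock Q a) ->
    ext_label Q sg u2 = inl (pblock Q a) -> adjacent u1 u2 ->
    connect (piece_rel (B z)) u1 u2.
  by move=> e1 e2 a12; apply: connect1; rewrite /piece_rel /= a12 !mB.
case/orP=> /eqP ve; subst v.
- case: (ext_label_ntop_inl ev) => [e1 | [e1 e2]].
    by exists otop; [apply: mB | apply: edge; rewrite ?adjacent_ntop_emb].
  exists obot; first exact: mB.
  apply: (@connect_trans _ _ nbot); apply: edge; rewrite //.
  + exact: adjacent_ntop_nbot.
  + by rewrite adjacent_nbot_emb.
- case: (ext_label_nbot_inl ev) => [e1 | [e1 e2]].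
    by exists obot; [apply: mB | apply: edge; rewrite ?adjacent_nbot_emb].
  exists otop; first exact: mB.
  apply: (@connect_trans _ _ ntop); apply: edge; rewrite //.
  + exact: adjacent_nbot_ntop.
  + by rewrite adjacent_ntop_emb.
Qed.

Lemma extend_division : division n.+2 #|extend Q sg| (extend Q sg).
Proof.
apply: divisionI; first exact: extend_partition.
move=> z w szw; rewrite -/(B z).
have wB : w \in B z by rewrite /B mem_pblock_same ?extend_partition.
have zB : z \in B z by rewrite mem_extend_block.
case e: (ext_label Q sg z) => [X | bb]; last first.
  apply: (connect_hub (h := z) _ zB wB) => v vB.
  have nv : is_new v by move: vB; rewrite mem_extend_block e => /eqP /esym /ext_label_inr.
  have nz : is_new z by apply: ext_label_inr e.
  apply: piece_rel_step => //.
  by move: nv nz; rewrite /is_new => /orP[]/eqP -> /orP[]/eqP ->;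
    rewrite ?eqxx ?adjacent_ntop_nbot ?adjacent_nbot_ntop ?orbT.
have [a ea] := ext_label_inl e; subst X.
have aB : emb a \in B z by rewrite mem_extend_block e ext_label_emb.
apply: (connect_hub (h := emb a) _ zB wB) => v vB.
have [ev|ev|[y ev]] := square_cases v; subst v; last exact: extend_old_connect.
all: have [|y yB cy] := extend_new_connect aB vB; rewrite ?/is_new ?eqxx ?orbT //.
all: by apply: connect_trans cy (extend_old_connect yB aB).
Qed.

End ExtendDivision.

Lemma compatible_state (P : {set {set T'}}) :
  compatible (same_block (restrict P) otop obot) (state_of P).
Proof.
rewrite same_block_restrict /state_of /compatible.
case u: (same_block P (emb otop) (emb obot)); case J: (same_block P ntop (emb otop));
  case K: (same_block P nbot (emb obot)); case C: (same_block P ntop nbot) => //=.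
- have K' : same_block P (emb obot) nbot by rewrite same_block_sym K.
  by rewrite -C (same_block_trans J (same_block_trans u K')).
- have C' : same_block P nbot ntop by rewrite same_block_sym C.
  by rewrite -K (same_block_trans C' (same_block_trans J u)).
- have u' : same_block P (emb obot) (emb otop) by rewrite same_block_sym u.
  by rewrite -J (same_block_trans C (same_block_trans K u')).
- have J' : same_block P (emb otop) ntop by rewrite same_block_sym J.
  by rewrite -u (same_block_trans J' (same_block_trans C K)).
Qed.

Section RestrictExtend.
Variables (k : nat) (P : {set {set T'}}).
Hypothesis divP : division n.+2 k P.

Definition piece_label (z : T') : ({set T} + bool)%type :=
  if [pick x | same_block P z (emb x)] is Some x then inl (pblock (restrict P) x)
  else inr (~~ same_block P z ntop).

Lemma pblock_restrict_eq x y :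
  (pblock (restrict P) x == pblock (restrict P) y) = same_block P (emb x) (emb y).
Proof. by rewrite -same_block_restrict. Qed.

Lemma piece_label_kernel z w : (piece_label z == piece_label w) = same_block P z w.
Proof.
have inlE (X Y : {set T}) : (inl X == inl Y :> ({set T} + bool)) = (X == Y) by [].
have new_of u : (forall x, ~~ same_block P u (emb x)) -> is_new u.
  move=> nu; have [->|->|[a e]] := square_cases u; rewrite /is_new ?eqxx ?orbT //.
  by have := nu a; rewrite -e same_block_refl.
rewrite /piece_label; case: pickP => [x1 h1|n1]; case: pickP => [x2 h2|n2] //=.
- rewrite inlE pblock_restrict_eq; apply/idP/idP => h.
    by apply: same_block_trans h1 (same_block_trans h _); rewrite same_block_sym.
  by apply: same_block_trans _ (same_block_trans h h2); rewrite same_block_sym.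
- apply/esym/negbTE/negP => h; move: (n2 x1).
  by rewrite (same_block_trans _ h1) // same_block_sym.
- by apply/esym/negbTE/negP => h; move: (n1 x2); rewrite (same_block_trans h h2).
- move: (new_of z (fun x => negbT (n1 x))) (new_of w (fun x => negbT (n2 x))).
  rewrite /is_new => /orP[]/eqP -> /orP[]/eqP ->;
    rewrite ?same_block_refl ?eqxx //= ?(same_block_sym P ntop nbot) //.
  all: by case: (same_block P nbot ntop).
Qed.

Lemma ext_label_restrict z : ext_label (restrict P) (state_of P) z = piece_label z.
Proof.
have inl_same x y : same_block P (emb x) (emb y) ->
    inl (pblock (restrict P) x) = inl (pblock (restrict P) y) :> ({set T} + bool).
  by rewrite -pblock_restrict_eq => /eqP ->.
rewrite /piece_label; have [ez|ez|[a ez]] := square_cases z; subst z.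
- rewrite ext_label_ntop /state_of; case: pickP => [x hx|hn].
    case J: (same_block P ntop (emb otop)).
      by apply: inl_same; apply: same_block_trans _ hx; rewrite same_block_sym.
    have [C K] : same_block P ntop nbot /\ same_block P ntop (emb obot).
      by have := ntop_block divP hx; rewrite J => /andP.
    have -> /= : same_block P nbot (emb obot).
      by apply: same_block_trans _ K; rewrite same_block_sym.
    by rewrite C; apply: inl_same; apply: same_block_trans _ hx; rewrite same_block_sym.
  rewrite (hn otop) same_block_refl /=.
  case C: (same_block P ntop nbot); case K: (same_block P nbot (emb obot)) => //=.
  by have := hn obot; rewrite (same_block_trans C K).
- rewrite ext_label_nbot /state_of; case: pickP => [x hx|hn].
    case K: (same_block P nbot (emb obot)).
      by apply: inl_same; apply: same_block_trans _ hx; rewrite same_block_sym.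
    have [C J] : same_block P nbot ntop /\ same_block P nbot (emb otop).
      by have := nbot_block divP hx; rewrite K => /andP.
    have -> /= : same_block P ntop (emb otop).
      by apply: same_block_trans _ J; rewrite same_block_sym.
    rewrite (same_block_sym P ntop nbot) C; apply: inl_same.
    by apply: same_block_trans _ hx; rewrite same_block_sym.
  rewrite (hn obot) (same_block_sym P ntop nbot) /=.
  case C: (same_block P nbot ntop); case J: (same_block P ntop (emb otop)) => //=.
  by have := hn otop; rewrite (same_block_trans C J).
- rewrite ext_label_emb; case: pickP => [x hx|hn]; last by have := hn a; rewrite same_block_refl.
  by apply: inl_same.
Qed.

Lemma extend_restrict : P = extend (restrict P) (state_of P).
Proof.
apply: partition_eq; [exact: division_partition divP | exact: extend_partition |].
by move=> z w; rewrite same_block_extend !ext_label_restrict piece_label_kernel.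
Qed.

End RestrictExtend.
End Restriction.

(* Number of divisions of the 2 x (n+1) board into k pieces whose last column
   is joined (b = true) or split (b = false). *)
Definition div_count n k b := #|[set P : {set {set square n.+1}} |
  division n.+1 k P & same_block P (@otop n) (@obot n) == b]|.

Lemma card_fibers (T I : finType) (A : {set T}) (f : T -> I) :
  #|A| = \sum_(i : I) #|[set x in A | f x == i]|.
Proof.
rewrite -sum1_card (partition_big f xpredT) //=; apply: eq_bigr => i _.
by rewrite -sum1_card; apply: eq_bigl => x; rewrite inE.
Qed.

Lemma state_fiber n k b (sg : state) :
  [set P in [set P | division n.+2 k P & same_block P (@ntop n) (@nbot n) == b]
     | state_of P == sg] =
  (fun Q => extend Q sg) @: [set Q : {set {set square n.+1}} | division n.+1 #|Q| Q &&
     [&& compatible (same_block Q (@otop n) (@obot n)) sg,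
         #|Q| + new_pieces sg == k & sg.2 == b]].
Proof.
apply/setP => P; rewrite !inE; apply/idP/imsetP.
- case/andP=> /andP[divP hb] /eqP hs.
  exists (restrict P); last by rewrite -hs; apply: extend_restrict divP.
  rewrite inE (restrict_division divP) /= -hs compatible_state /=.
  rewrite -(card_extend (state_of P) (restrict_partition P)) -(extend_restrict divP).
  by rewrite (division_card divP) eqxx.
- case=> Q; rewrite inE => /andP[divQ /and3P[hv /eqP hk hb]] ->.
  rewrite (state_extend hv) eqxx andbT -hk -(card_extend sg (division_partition divQ)).
  move: (congr1 snd (state_extend hv)) => /= ->.
  by rewrite (extend_division sg divQ).
Qed.

Lemma count_S n k b : div_count n.+1 k b = \sum_(sg : state) \sum_(u : bool)
  (if compatible u sg && (sg.2 == b) && (new_pieces sg <= k)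
   then div_count n (k - new_pieces sg) u else 0).
Proof.
rewrite /div_count (card_fibers _ (@state_of n)); apply: eq_bigr => sg _.
rewrite state_fiber card_in_imset; last first.
  move=> Q1 Q2; rewrite !inE => /andP[h1 _] /andP[h2 _] e.
  by rewrite -(restrict_extend sg (division_partition h1)) e
    restrict_extend ?(division_partition h2).
rewrite (card_fibers _ (fun Q => same_block Q (@otop n) (@obot n))).
apply: eq_bigr => u _; case: ifP => hc.
  apply: eq_card => Q; rewrite !inE.
  case: (boolP (same_block Q (@otop n) (@obot n) == u)) => hu; rewrite ?andbF ?andbT //.
  move/eqP: hu => ->; move: hc => /andP[/andP[hv hb] hd].
  by rewrite hv hb /= andbT division_shift hd.
apply/eqP; rewrite cards_eq0; apply/eqP/setP => Q; rewrite !inE.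
apply/negbTE/negP => /andP[/andP[_ /and3P[hv /eqP hk hb]] /eqP hu].
by move: hc; rewrite -hu hv hb -hk leq_addl.
Qed.

Lemma square1_cases (x : square 1) : x = @otop 0 \/ x = @obot 0.
Proof.
case: x => r c; have -> : c = ord_max by apply: val_inj; case: c => [[|]].
by case: (row_cases r) => ->; [left|right].
Qed.

Definition one_piece := preim_partition (fun _ : square 1 => tt) [set: square 1].
Definition two_pieces := preim_partition id [set: square 1].

Lemma division1 (P : {set {set square 1}}) : partition P [set: square 1] ->
  division 1 #|P| P.
Proof.
move=> hP; apply: divisionI => // x y sxy.
apply: piece_rel_step; rewrite ?mem_pblock_same ?same_block_refl //.
by case: (square1_cases x) => ->; case: (square1_cases y) => ->;
  rewrite ?eqxx ?adjacent_otop_obot ?adjacent_obot_otop ?orbT.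
Qed.

Lemma card_one_piece : #|one_piece| = 1.
Proof.
rewrite (card_partition_labels (@otop 0) (preim_partitionP _ _) (same_block_preim _)).
have -> : (fun _ : square 1 => tt) @: [set: square 1] = [set tt].
  by apply/setP => -[]; rewrite in_set1 eqxx; apply/imsetP; exists (@otop 0).
by rewrite cards1.
Qed.

Lemma card_two_pieces : #|two_pieces| = 2.
Proof.
rewrite (card_partition_labels (@otop 0) (preim_partitionP _ _) (same_block_preim _)).
by rewrite imset_id cardsT card_prod !card_ord.
Qed.

Lemma partition1_cases (P : {set {set square 1}}) : partition P [set: square 1] ->
  P = if same_block P (@otop 0) (@obot 0) then one_piece else two_pieces.
Proof.
move=> hP; case: ifP => h; apply: partition_eq => //; try exact: preim_partitionP.
all: move=> x y; rewrite same_block_preim.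
all: by case: (square1_cases x) => ->; case: (square1_cases y) => ->;
  rewrite ?same_block_refl ?eqxx // same_block_sym h.
Qed.

Lemma count_0 k b : div_count 0 k b = (k == (if b then 1 else 2)).
Proof.
have [P0 [hP0 sP0 cP0]] : exists P0, [/\ partition P0 [set: square 1],
    same_block P0 (@otop 0) (@obot 0) = b & #|P0| = (if b then 1 else 2)].
  exists (if b then one_piece else two_pieces); case: b; split;
    rewrite ?same_block_preim ?card_one_piece ?card_two_pieces //; exact: preim_partitionP.
have P0E : P0 = if b then one_piece else two_pieces by rewrite -sP0 -partition1_cases.
rewrite /div_count (_ : [set P | _ & _] = [set P | (P == P0) && (k == #|P0|)]); last first.
  apply/setP => P; rewrite !inE; apply/idP/idP.
    case/andP=> divP /eqP hs.
    have e : P = P0 by rewrite (partition1_cases (division_partition divP)) hs.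
    by rewrite e eqxx -e (division_card divP) eqxx.
  by case/andP=> /eqP -> /eqP ->; rewrite division1 // sP0 eqxx.
rewrite -cP0; case: eqP => _; last first.
  by rewrite (_ : [set _ | _] = set0) ?cards0 //; apply/setP => P; rewrite !inE andbF.
by rewrite (_ : [set _ | _] = [set P0]) ?cards1 //; apply/setP => P; rewrite !inE andbT.
Qed.

Definition shifted (j : nat) (f : nat -> nat) k := if j <= k then f (k - j) else 0.

Lemma count_joinedS n k : div_count n.+1 k true =
  div_count n k true + shifted 1 (div_count n ^~ true) k
  + 2 * div_count n k false + shifted 1 (div_count n ^~ false) k.
Proof.
rewrite count_S /index_enum !unlock /= /prod_enum /= !enumT !unlock /= /prod_enum /=.
rewrite !enumT !unlock /= /shifted !addn0 !add0n !subn0.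
by case: (1 <= k); lia.
Qed.

Lemma count_splitS n k : div_count n.+1 k false =
  2 * shifted 1 (div_count n ^~ true) k + shifted 2 (div_count n ^~ true) k
  + div_count n k false + 2 * shifted 1 (div_count n ^~ false) k
  + shifted 2 (div_count n ^~ false) k.
Proof.
rewrite count_S /index_enum !unlock /= /prod_enum /= !enumT !unlock /= /prod_enum /=.
rewrite !enumT !unlock /= /shifted !addn0 !add0n !subn0 -[1 + 1]/2.
by case: (0 < k); case: (1 < k); lia.
Qed.

Definition bin_le e (f : nat -> nat) := exists c : nat -> nat,
  forall m, f m = \sum_(j < e.+1) c j * 'C(m, j).
Definition bin_deg e (f : nat -> nat) := exists c : nat -> nat,
  0 < c e /\ forall m, f m = \sum_(j < e.+1) c j * 'C(m, j).

Lemma bin_le0 e : bin_le e (fun _ => 0).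
Proof. by exists (fun _ => 0) => m; rewrite big1. Qed.

Lemma bin_deg_le e f : bin_deg e f -> bin_le e f.
Proof. by case=> c [_ h]; exists c. Qed.

Lemma bin_le_ext e f g : f =1 g -> bin_le e f -> bin_le e g.
Proof. by move=> h [c hc]; exists c => m; rewrite -h. Qed.

Lemma bin_deg_ext e f g : f =1 g -> bin_deg e f -> bin_deg e g.
Proof. by move=> h [c [hc0 hc]]; exists c; split=> // m; rewrite -h. Qed.

Lemma bin_le_mono e e' f : e <= e' -> bin_le e f -> bin_le e' f.
Proof.
move=> le [c hc]; exists (fun j => if j <= e then c j else 0) => m.
rewrite hc (big_ord_widen e'.+1 (fun j => c j * 'C(m, j))) // big_mkcond.
by apply: eq_bigr => i _; rewrite ltnS; case: ifP.
Qed.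

(* Adding a combination of degree at most e keeps the exact degree e, since
   coefficients are natural numbers. *)
Lemma bin_deg_add e f g : bin_deg e f -> bin_le e g -> bin_deg e (fun m => f m + g m).
Proof.
case=> c [hc0 hc] [c' hc']; exists (fun j => c j + c' j); split; first by rewrite ltn_addr.
by move=> m; rewrite hc hc' -big_split; apply: eq_bigr => i _; rewrite mulnDl.
Qed.

Lemma bin_le_double e f : bin_le e f -> bin_le e (fun m => 2 * f m).
Proof.
case=> c hc; exists (fun j => 2 * c j) => m.
by rewrite hc big_distrr; apply: eq_bigr => i _ /=; rewrite mulnA.
Qed.

Lemma bin_deg_double e f : bin_deg e f -> bin_deg e (fun m => 2 * f m).
Proof.
case=> c [hc0 hc]; exists (fun j => 2 * c j); split; first by rewrite muln_gt0.
by move=> m; rewrite hc big_distrr; apply: eq_bigr => i _; rewrite /= mulnA.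
Qed.

(* Discrete integration in the binomial basis, by Pascal's rule
   C(m+1, j+1) = C(m, j+1) + C(m, j). *)
Lemma bin_sum_integrate e (c : nat -> nat) f :
  (forall m, f m.+1 = f m + \sum_(j < e.+1) c j * 'C(m, j)) ->
  forall m, f m = \sum_(j < e.+2) (if (j : nat) is j'.+1 then c j' else f 0) * 'C(m, j).
Proof.
move=> h; elim=> [|m IH].
  by rewrite big_ord_recl /= bin0 muln1 big1 ?addn0 // => i _; rewrite bin0n muln0.
rewrite h IH !(big_ord_recl e.+1) /= !bin0 -addnA; congr addn.
rewrite -big_split; apply: eq_bigr => i _ /=.
by rewrite /bump /= add1n binS mulnDr addnC.
Qed.

Lemma bin_deg_integrate e f g : bin_deg e g -> (forall m, f m.+1 = f m + g m) ->
  bin_deg e.+1 f.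
Proof.
case=> c [hc0 hc] h; exists (fun j => if j is j'.+1 then c j' else f 0); split=> //.
by apply: bin_sum_integrate => m; rewrite h hc.
Qed.

Definition joined_count k m := div_count m k true.
Definition split_count k m := div_count m k false.

Lemma count_no_piece m b : div_count m 0 b = 0.
Proof.
elim: m b => [|m IH] b; first by rewrite count_0; case: b.
by case: b; rewrite ?count_joinedS ?count_splitS /shifted /= !IH.
Qed.

Lemma split_one m : split_count 1 m = 0.
Proof.
rewrite /split_count; elim: m => [|m IH]; first by rewrite count_0.
by rewrite count_splitS /shifted /= IH !count_no_piece.
Qed.

Lemma joined_one m : joined_count 1 m = 1.
Proof.
rewrite /joined_count; elim: m => [|m IH]; first by rewrite count_0.
by rewrite count_joinedS /shifted /= IH -/(split_count 1 m) split_one !count_no_piece.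
Qed.

Lemma split_diff j m : split_count j.+2 m.+1 = split_count j.+2 m +
  (2 * joined_count j.+1 m + joined_count j m + 2 * split_count j.+1 m + split_count j m).
Proof. by rewrite /split_count /joined_count count_splitS /shifted /= ?subSS ?subn0; lia. Qed.

Lemma joined_diff j m : joined_count j.+2 m.+1 =
  joined_count j.+2 m + (joined_count j.+1 m + 2 * split_count j.+2 m + split_count j.+1 m).
Proof. by rewrite /split_count /joined_count count_joinedS /shifted /= ?subSS ?subn0; lia. Qed.

Definition degree_inv j := [/\ bin_deg (2 * j) (joined_count j.+1),
  bin_le (2 * j) (split_count j.+1), bin_le (2 * j) (joined_count j)
  & bin_le (2 * j) (split_count j)].

Lemma split_degree j : degree_inv j -> bin_deg (2 * j).+1 (split_count j.+2).
Proof.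
case=> dj1 ds1 dj0 ds0; apply: bin_deg_integrate (split_diff j).
apply: bin_deg_add ds0; apply: bin_deg_add (bin_le_double ds1).
exact: bin_deg_add (bin_deg_double dj1) dj0.
Qed.

Lemma joined_degree j : degree_inv j -> bin_deg (2 * j).+2 (joined_count j.+2).
Proof.
move=> inv; have [dj1 ds1 _ _] := inv.
apply: bin_deg_integrate (joined_diff j).
apply: bin_deg_add (bin_le_mono (leqnSn _) ds1).
apply: (bin_deg_ext (f := fun m => 2 * split_count j.+2 m + joined_count j.+1 m)).
  by move=> m; exact: addnC.
apply: bin_deg_add (bin_deg_double (split_degree inv)) _.
exact: bin_le_mono (leqnSn _) (bin_deg_le dj1).
Qed.

Lemma degree_inv0 : degree_inv 0.
Proof.
split; first by exists (fun _ => 1); split=> // m; rewrite big_ord1 bin0 joined_one.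
- by apply: bin_le_ext (bin_le0 0) => m; rewrite split_one.
- by apply: bin_le_ext (bin_le0 0) => m; rewrite /joined_count count_no_piece.
- by apply: bin_le_ext (bin_le0 0) => m; rewrite /split_count count_no_piece.
Qed.

Lemma degree_invS j : degree_inv j -> degree_inv j.+1.
Proof.
move=> inv; have [dj1 ds1 _ _] := inv.
have le2 : 2 * j <= 2 * j.+1 by rewrite leq_mul2l leqnSn orbT.
split; rewrite ?mulnS.
- exact: joined_degree.
- exact: bin_le_mono (leqnSn _) (bin_deg_le (split_degree inv)).
- by rewrite -mulnS; apply: bin_le_mono le2 (bin_deg_le dj1).
- by rewrite -mulnS; apply: bin_le_mono le2 ds1.
Qed.

Lemma degree_invP j : degree_inv j.
Proof. by elim: j => [|j]; [exact: degree_inv0 | exact: degree_invS]. Qed.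

Lemma d_count k n : d k n.+1 = joined_count k n + split_count k n.
Proof.
rewrite /d (card_fibers _ (fun P => same_block P (@otop n) (@obot n))) big_bool.
by congr addn; apply: eq_card => P; rewrite !inE.
Qed.

Lemma s_count k n : s k n.+1 = split_count k n.
Proof.
rewrite /s /split_count /div_count; apply: eq_card => P.
by rewrite !inE rightmost_splitE; case: same_block.
Qed.

Section Interpolation.
Import GRing.Theory Num.Theory.
Local Open Scope ring_scope.

Definition binom_poly (j : nat) : {poly rat} :=
  (j`!%:R)^-1 *: \prod_(0 <= i < j) ('X - (i.+1)%:R%:P).

Lemma prod_natrB (n j : nat) : \prod_(0 <= i < j) (n%:R - i%:R) = (n ^_ j)%:R :> rat.
Proof.
elim: j => [|j IH]; first by rewrite big_geq // ffact0.
rewrite big_nat_recr //= IH ffactnSr natrM.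
by case: (leqP j n) => h; [rewrite natrB | rewrite ffact_small // !mul0r].
Qed.

Lemma fact_neq0 j : (j`!%:R : rat) != 0.
Proof. by rewrite pnatr_eq0 -lt0n fact_gt0. Qed.

Lemma binom_poly_eval j n : (binom_poly j).[n.+1%:R] = ('C(n, j))%:R.
Proof.
rewrite /binom_poly hornerZ horner_prod.
under eq_bigr => i _ do rewrite hornerXsubC.
have -> : \prod_(0 <= i < j) ((n.+1)%:R - (i.+1)%:R) = \prod_(0 <= i < j) (n%:R - i%:R) :> rat.
  by apply: eq_bigr => i _; rewrite -[n.+1]addn1 -[i.+1]addn1 !natrD; ring.
by rewrite prod_natrB -bin_ffact natrM mulrC mulfK // fact_neq0.
Qed.

Lemma size_binom_poly j : size (binom_poly j) = j.+1.
Proof.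
by rewrite /binom_poly size_scale ?invr_eq0 ?fact_neq0 // size_prod_XsubC size_iota subn0.
Qed.

Lemma size_binom_comb (c : nat -> nat) i :
  (size (\sum_(j < i) (c j)%:R *: binom_poly j)%R <= i)%N.
Proof.
elim: i => [|i IH]; first by rewrite big_ord0 size_poly0.
rewrite big_ord_recr /=; apply: leq_trans (size_polyD _ _) _.
rewrite geq_max (leq_trans IH) // (leq_trans (size_scale_leq _ _)) //.
by rewrite size_binom_poly.
Qed.

Lemma bin_deg_poly e f : bin_deg e f -> exists D : {poly rat}, size D = e.+1 /\
  forall n : nat, (1 <= n)%N -> D.[n%:R] = (f n.-1)%:R.
Proof.
case=> c [hc0 hc]; exists (\sum_(j < e.+1) (c j)%:R *: binom_poly j); split.
  have ce : (c e)%:R != 0 :> rat by rewrite pnatr_eq0 -lt0n.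
  rewrite big_ord_recr /= addrC size_polyDl size_scale ?size_binom_poly //.
  by rewrite ltnS size_binom_comb.
case=> // n _; rewrite /= hc horner_sum natr_sum; apply: eq_bigr => j _.
by rewrite hornerZ binom_poly_eval natrM.
Qed.

End Interpolation.

Import GRing.Theory.
Local Open Scope ring_scope.

Theorem theorem3 :
  (forall k : nat, (1 <= k)%N ->
     exists D : {poly rat}, size D = (2 * k - 1)%N /\
       forall n : nat, (1 <= n)%N -> D.[n%:R] = (d k n)%:R) /\
  (forall k : nat, (2 <= k)%N ->
     exists S : {poly rat}, size S = (2 * k - 2)%N /\
       forall n : nat, (1 <= n)%N -> S.[n%:R] = (s k n)%:R).
Proof.
split.
  (* d with j+1 pieces: joined part of degree exactly 2j plus split part of
     degree at most 2j. *)
  case=> // j _; have [dj1 ds1 _ _] := degree_invP j.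
  have [D [sizeD evalD]] := bin_deg_poly (bin_deg_add dj1 ds1).
  exists D; split; first by rewrite sizeD; lia.
  by case=> // n _; rewrite evalD // d_count.
case=> // [[]] // j _.
have [S [sizeS evalS]] := bin_deg_poly (split_degree (degree_invP j)).
exists S; split; first by rewrite sizeS; lia.
by case=> // n _; rewrite evalS // s_count.
Qed.
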